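(* As formal power series in $q$, $$A(q):=\frac{1}{(q;q)_\infty}\sum_{n\ge1}\frac{(-1)^{n-1}n\,q^{\frac{n(n+1)}{2}}}{1-q^n}=\sum_{\lambda}t_s(\lambda)\,q^{|\lambda|},$$ where the sum on the right runs over all partitions $\lambda$ of all positive integers.
   Context: $(q;q)_\infty:=\prod_{n\ge1}(1-q^n)$. For a partition $\lambda$, $|\lambda|$ denotes the integer it partitions. Let $n_\lambda$ be the largest integer $n$ such that $\lambda$ contains parts of each size $1,2,\ldots,n$ (so $n_\lambda=0$ if $1$ is not a part), and let $m_k$ be the multiplicity of the part $k$ in $\lambda$. The signed triangular weight of $\lambda$ is $t_s(\lambda):=\sum_{k=1}^{n_\lambda}(-1)^{k-1}k\,m_k$ (so $t_s(\lambda)=0$ if $\lambda$ has no part equal to $1$). *)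

From mathcomp Require Import all_boot all_order all_algebra.
Set Implicit Arguments. Unset Strict Implicit. Unset Printing Implicit Defensive.
Import Order.TTheory GRing.Theory Num.Theory.
Local Open Scope ring_scope.

Definition fps := nat -> rat.

Definition fps_mul (f g : fps) : fps :=
  fun n => \sum_(i < n.+1) f i * g (n - i)%N.

(* Multiplicative inverse of a series with invertible constant term:
   g_0 = f_0^-1,  g_(n+1) = - f_0^-1 * sum_(i=1)^(n+1) f_i g_(n+1-i). *)
Fixpoint inv_seq (f : fps) (n : nat) : seq rat :=
  match n with
  | 0 => [:: (f 0%N)^-1]
  | n'.+1 => let s := inv_seq f n' in
             rcons s (- (f 0%N)^-1 * \sum_(i < n'.+1) f i.+1 * nth 0 s (n' - i)%N)
  end.
Definition fps_inv (f : fps) : fps := fun n => nth 0 (inv_seq f n) n.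

Definition fps_X (k : nat) : fps := fun m => (m == k)%:R.
Definition fps_1mX (n : nat) : fps := fun m => (m == 0)%:R - (m == n)%:R.

(* (q;q)_infty = prod_(n>=1) (1 - q^n): its coefficient of q^N is that of the
   finite product over 1 <= n <= N (factors with n > N do not contribute). *)
Definition qpoch_inf : fps :=
  fun N => (\prod_(1 <= n < N.+1) (1 - 'X^n) : {poly rat})`_N.

Definition A_term (n : nat) : fps :=
  fun m => (-1) ^+ n.-1 * n%:R * fps_mul (fps_X (n * n.+1)./2) (fps_inv (fps_1mX n)) m.

(* sum_(n>=1) A_term n; the n-th summand has valuation n(n+1)/2 >= n, so only
   n <= M contribute to the coefficient of q^M. *)
Definition A_sum : fps := fun M => \sum_(1 <= n < M.+1) A_term n M.

Definition A_series : fps := fps_mul (fps_inv qpoch_inf) A_sum.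

Definition is_partition (s : seq nat) : bool :=
  sorted geq s && all (fun x => 0 < x)%N s.

(* The list of all partitions of N (each partition of N has at most N parts,
   each at most N, so it is the nonzero part of some N-tuple over 'I_N.+1). *)
Definition partitions_of (N : nat) : seq (seq nat) :=
  undup [seq s <- [seq [seq x <- map val (val t) | (0 < x)%N] | t : N.-tuple 'I_N.+1]
          | is_partition s && (sumn s == N)].

Definition n_lam (s : seq nat) : nat :=
  \max_(n < (size s).+1 | all (fun k => k \in s) (iota 1 n)) (n : nat).

Definition ts (s : seq nat) : rat :=
  \sum_(1 <= k < (n_lam s).+1) (-1) ^+ k.-1 * k%:R * (count_mem k s)%:R.

From mathcomp Require Import all_boot all_order all_algebra.
From mathcomp Require Import zify ring.
Set Implicit Arguments.
Unset Strict Implicit.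
Unset Printing Implicit Defensive.

Import Order.TTheory GRing.Theory Num.Theory.
Local Open Scope ring_scope.

(* Work modulo q^(N+1), where (q;q)_oo becomes prod_(n <= N) (1 - q^n) and
   1/(1 - q^n) a truncated geometric sum.  Record a partition by its multiplicities
   m_1, ..., m_N: then t_s = sum_k (-1)^(k-1) k [m_1, ..., m_(k-1) > 0] m_k, and each
   summand is a product of factors depending on a single m_j.  Hence the generating
   function of t_s is sum_k (-1)^(k-1) k prod_j E_kj(q), and multiplying by (q;q)_oo
   turns E_kj into q^j for j < k, into q^k/(1 - q^k) for j = k and into 1 for j > k,
   which leaves exactly the k-th summand (-1)^(k-1) k q^(k(k+1)/2)/(1 - q^k) of A. *)

Definition eqmodX {R : nzRingType} (n : nat) (p q : {poly R}) : Prop :=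
  forall i, (i < n)%N -> p`_i = q`_i.

Notation "p = q %[modX n ]" := (eqmodX n p q)
  (at level 70, q at next level, format "p  =  q  %[modX  n ]").

Section PolyModX.
Variable R : nzRingType.
Implicit Types p q r : {poly R}.

Lemma eqmodX_sym n p q : p = q %[modX n] -> q = p %[modX n].
Proof. by move=> Epq i lt_in; rewrite Epq. Qed.

Lemma eqmodX_trans n q p r : p = q %[modX n] -> q = r %[modX n] -> p = r %[modX n].
Proof. by move=> Epq Eqr i lt_in; rewrite Epq ?Eqr. Qed.

Lemma eqmodXD n p p' q q' :
  p = p' %[modX n] -> q = q' %[modX n] -> p + q = p' + q' %[modX n].
Proof. by move=> Ep Eq i lt_in; rewrite !coefD Ep ?Eq. Qed.

Lemma eqmodXN n p p' : p = p' %[modX n] -> - p = - p' %[modX n].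
Proof. by move=> Ep i lt_in; rewrite !coefN Ep. Qed.

Lemma eqmodXM n p p' q q' :
  p = p' %[modX n] -> q = q' %[modX n] -> p * q = p' * q' %[modX n].
Proof.
move=> Ep Eq i lt_in; rewrite !coefM; apply: eq_bigr => j _.
by rewrite Ep ?Eq //; have := ltn_ord j; lia.
Qed.

Lemma eqmodXMl n r p p' : p = p' %[modX n] -> r * p = r * p' %[modX n].
Proof. exact: eqmodXM. Qed.

Lemma eqmodXMr n r p p' : p = p' %[modX n] -> p * r = p' * r %[modX n].
Proof. by move/eqmodXM; apply. Qed.

Lemma eqmodX_sum n (I : Type) (s : seq I) (P : pred I) (F G : I -> {poly R}) :
  (forall i, P i -> F i = G i %[modX n]) ->
  \sum_(i <- s | P i) F i = \sum_(i <- s | P i) G i %[modX n].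
Proof. by move=> EFG; apply: (big_ind2 (eqmodX n)) => // *; apply: eqmodXD. Qed.

Lemma eqmodX_prod n (I : Type) (s : seq I) (P : pred I) (F G : I -> {poly R}) :
  (forall i, P i -> F i = G i %[modX n]) ->
  \prod_(i <- s | P i) F i = \prod_(i <- s | P i) G i %[modX n].
Proof. by move=> EFG; apply: (big_ind2 (eqmodX n)) => // *; apply: eqmodXM. Qed.

Lemma eqmodX_XnM n e r : (n <= e)%N -> 'X^e * r = 0 %[modX n].
Proof. by move=> le_ne i lt_in; rewrite coefXnM coef0 (leq_trans lt_in le_ne). Qed.

Lemma eqmodX_subXn n p e r : (n <= e)%N -> p - 'X^e * r = p %[modX n].
Proof.
move=> le_ne; rewrite -[X in _ = X %[modX _]]subr0.
by apply: eqmodXD => //; apply/eqmodXN/eqmodX_XnM.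
Qed.

Lemma eqmodX_1subXn n e : (n <= e)%N -> (1 - 'X^e : {poly R}) = 1 %[modX n].
Proof. by rewrite -[X in _ - X]mulr1; apply: eqmodX_subXn. Qed.

Lemma eqmodX_prod_1subXn n m1 m2 :
  (n <= m1)%N -> \prod_(m1 <= e < m2) (1 - 'X^e : {poly R}) = 1 %[modX n].
Proof.
move=> le_nm1; rewrite big_nat_cond.
apply: (big_ind (fun p => p = 1 %[modX n])) => // [p q Ep Eq | e /andP[/andP[le_m1e _] _]].
  by have := eqmodXM Ep Eq; rewrite mulr1.
by apply: eqmodX_1subXn; apply: leq_trans le_m1e.
Qed.

End PolyModX.

Lemma mul1B_sumX (R : pzRingType) (x : R) n :
  (1 - x) * \sum_(a < n) x ^+ a = 1 - x ^+ n.
Proof. by rewrite -opprB mulNr -subrX1 opprB. Qed.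

Lemma mul1B_sum_natX (R : comPzRingType) (x : R) n :
  (1 - x) * \sum_(a < n.+1) a%:R * x ^+ a = x * \sum_(a < n) x ^+ a - n%:R * x ^+ n.+1.
Proof.
elim: n => [|n IHn]; first by rewrite big_ord1 big_ord0 !mul0r mulr0 subr0 mulr0.
rewrite big_ord_recr mulrDr IHn [in RHS]big_ord_recr /= !exprS -!natr1; ring.
Qed.

Lemma size_inv_seq f n : size (inv_seq f n) = n.+1.
Proof. by elim: n => //= n IHn; rewrite size_rcons IHn. Qed.

Lemma nth_inv_seq f n j : (j <= n)%N -> nth 0 (inv_seq f n) j = fps_inv f j.
Proof.
elim: n => [|n IHn]; first by rewrite leqn0 => /eqP ->.
rewrite leq_eqVlt => /orP[/eqP -> // | lt_jn].
by rewrite /= nth_rcons size_inv_seq lt_jn IHn.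
Qed.

Lemma fps_invS f n :
  fps_inv f n.+1 = - (f 0%N)^-1 * \sum_(i < n.+1) f i.+1 * fps_inv f (n - i)%N.
Proof.
rewrite {1}/fps_inv /= nth_rcons size_inv_seq ltnn eqxx.
by congr (_ * _); apply: eq_bigr => i _; rewrite nth_inv_seq // leq_subr.
Qed.

Lemma fps_mulV f n : f 0%N != 0 -> fps_mul f (fps_inv f) n = (n == 0%N)%:R.
Proof.
move=> f0_neq0; case: n => [|n]; first by rewrite /fps_mul big_ord1 mulfV.
rewrite /fps_mul big_ord_recl subn0 fps_invS mulrA mulrN mulfV // mulN1r.
by under [X in _ + X]eq_bigr => i _ do rewrite subSS; rewrite addNr.
Qed.

Definition fps_trunc N (f : fps) : {poly rat} := \poly_(i < N.+1) f i.

Lemma coef_fps_mul N f g i :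
  (i <= N)%N -> fps_mul f g i = (fps_trunc N f * fps_trunc N g)`_i.
Proof.
move=> le_iN; rewrite coefM; apply: eq_bigr => j _; rewrite !coef_poly.
by rewrite !ifT //; have := ltn_ord j; lia.
Qed.

Lemma fps_truncP N f (p : {poly rat}) :
  (forall i, (i <= N)%N -> f i = p`_i) -> fps_trunc N f = p %[modX N.+1].
Proof. by move=> Efp i lt_iN; rewrite coef_poly lt_iN Efp. Qed.

Lemma fps_trunc_mulV N f (p : {poly rat}) :
  f 0%N != 0 -> fps_trunc N f = p %[modX N.+1] ->
  p * fps_trunc N (fps_inv f) = 1 %[modX N.+1].
Proof.
move=> f0_neq0 Efp; apply: (eqmodX_trans (eqmodXMr _ (eqmodX_sym Efp))).
by move=> i lt_iN; rewrite -coef_fps_mul // fps_mulV // coef1.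
Qed.

Lemma fps_trunc_inv N f (p r : {poly rat}) :
  f 0%N != 0 -> fps_trunc N f = p %[modX N.+1] -> p * r = 1 %[modX N.+1] ->
  fps_trunc N (fps_inv f) = r %[modX N.+1].
Proof.
move=> f0_neq0 Efp pr1; set g := fps_trunc N _.
have gp1 : g * p = 1 %[modX N.+1] by rewrite mulrC; apply: fps_trunc_mulV.
apply: (eqmodX_trans (q := g * (p * r))).
  by rewrite -[X in X = _ %[modX _]]mulr1; apply/eqmodXMl/eqmodX_sym.
by rewrite mulrA -[X in _ = X %[modX _]]mul1r; apply: eqmodXMr.
Qed.

Definition qpoch N : {poly rat} := \prod_(1 <= n < N.+1) (1 - 'X^n).

Lemma fps_trunc_qpoch_inf N : fps_trunc N qpoch_inf = qpoch N %[modX N.+1].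
Proof.
apply: fps_truncP => i le_iN; rewrite /qpoch (big_cat_nat _ (n := i.+1)) //=.
rewrite /qpoch_inf -[in LHS](mulr1 (\prod_(1 <= n < i.+1) _)).
by apply: (eqmodXMl _ (eqmodX_sym (eqmodX_prod_1subXn _ N.+1 (leqnn _)))).
Qed.

Definition geomX N n : {poly rat} := \sum_(a < N.+1) 'X^n ^+ a.

Lemma fps_trunc_inv_1subX N n :
  (0 < n)%N -> fps_trunc N (fps_inv (fps_1mX n)) = geomX N n %[modX N.+1].
Proof.
move=> n_gt0; apply: (@fps_trunc_inv _ _ (1 - 'X^n)).
- by rewrite /fps_1mX eqxx; case: n n_gt0.
- by apply: fps_truncP => i _; rewrite coefB coef1 coefXn.
- by rewrite /geomX mul1B_sumX -exprM; apply: eqmodX_1subXn; rewrite leq_pmull.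
Qed.

Definition A_term_poly N n : {poly rat} :=
  ((-1) ^+ n.-1 * n%:R)%:P * ('X^'C(n.+1, 2) * geomX N n).

Definition A_sum_poly N : {poly rat} := \sum_(1 <= n < N.+1) A_term_poly N n.

Lemma A_term_coef N n i :
  (0 < n)%N -> (i <= N)%N -> A_term n i = (A_term_poly N n)`_i.
Proof.
move=> n_gt0 le_iN; rewrite /A_term /A_term_poly coefCM (coef_fps_mul (N := N)) //.
congr (_ * _); apply: (eqmodXM _ (fps_trunc_inv_1subX (N := N) n_gt0)) => //.
by apply: fps_truncP => j _; rewrite /fps_X coefXn bin2 mulnC.
Qed.

Lemma fps_trunc_A_sum N : fps_trunc N A_sum = A_sum_poly N %[modX N.+1].
Proof.
apply: fps_truncP => i le_iN; rewrite /A_sum /A_sum_poly coef_sum.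
rewrite [RHS](big_cat_nat _ (n := i.+1)) //= [X in _ + X]big1_seq ?addr0.
  by rewrite !big_nat; apply: eq_bigr => n /andP[n_gt0 _]; apply: A_term_coef.
move=> n /andP[_]; rewrite mem_index_iota => /andP[lt_in _].
rewrite coefCM coefXnM ifT ?mulr0 //.
by apply: leq_trans lt_in _; rewrite binS bin1 leq_addl.
Qed.

Section MultiplicityVectors.
Variable N : nat.

(* j : 'I_N stands for the part j + 1, and m j is its multiplicity. *)
Definition mults := {ffun 'I_N -> 'I_N.+1}.

Definition weight (m : mults) : nat := (\sum_(j < N) j.+1 * m j)%N.

Definition ts_factor (k j : 'I_N) (a : nat) : rat :=
  if (j < k)%N then (0 < a)%:R else if j == k then a%:R else 1.

Definition ts_mults (m : mults) : rat :=
  \sum_(k < N) (-1) ^+ k * k.+1%:R * \prod_(j < N) ts_factor k j (m j).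

Definition ts_genpoly : {poly rat} := \sum_(m : mults) (ts_mults m)%:P * 'X^(weight m).

Definition ts_factor_poly (k j : 'I_N) : {poly rat} :=
  \sum_(a < N.+1) (ts_factor k j a)%:P * 'X^(j.+1) ^+ a.

Lemma ts_genpoly_prod : ts_genpoly =
  \sum_(k < N) ((-1) ^+ k * k.+1%:R)%:P * \prod_(j < N) ts_factor_poly k j.
Proof.
under [RHS]eq_bigr => k _ do rewrite bigA_distr_bigA mulr_sumr.
rewrite exchange_big /=; apply: eq_bigr => m _.
rewrite /ts_mults rmorph_sum mulr_suml; apply: eq_bigr => k _.
rewrite big_split /= -rmorph_prod rmorphM -mulrA; congr (_ * (_ * _)).
by rewrite -prodrXr; apply: eq_bigr => j _; rewrite exprM.
Qed.

Lemma eqmodX_subXpow (p c : {poly rat}) j : p - c * 'X^(j.+1) ^+ N.+1 = p %[modX N.+1].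
Proof. by rewrite -exprM mulrC; apply: eqmodX_subXn; rewrite leq_pmull. Qed.

Lemma mul1B_ts_factor_poly (k j : 'I_N) : (1 - 'X^(j.+1)) * ts_factor_poly k j =
  (if (j <= k)%N then 'X^(j.+1) else 1) * (if j == k then geomX N k.+1 else 1) %[modX N.+1].
Proof.
rewrite /ts_factor_poly /ts_factor; set x := 'X^(j.+1).
case: (ltngtP j k) => [lt_jk | lt_kj | /val_inj eq_jk].
- rewrite -[j == k]val_eqE (ltn_eqF lt_jk) mulr1 big_ord_recl mul0r add0r.
  under eq_bigr do rewrite mul1r exprS.
  rewrite -mulr_sumr mulrCA mul1B_sumX mulrBr mulr1 -exprS -[x ^+ _]mul1r.
  exact: eqmodX_subXpow.
- rewrite -[j == k]val_eqE (gtn_eqF lt_kj) mulr1.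
  under eq_bigr do rewrite mul1r.
  by rewrite mul1B_sumX -[x ^+ _]mul1r; apply: eqmodX_subXpow.
- rewrite -eq_jk eqxx /geomX -/x.
  under eq_bigr do rewrite polyC_natr.
  rewrite mul1B_sum_natX big_ord_recr /= mulrDr -exprS.
  apply: (eqmodX_trans (q := x * \sum_(a < N) x ^+ a)); first exact: eqmodX_subXpow.
  apply: eqmodX_sym; rewrite -[x ^+ N.+1]opprK -[- x ^+ N.+1]mulN1r.
  exact: eqmodX_subXpow.
Qed.

Lemma sum_parts_le (k : 'I_N) : (\sum_(j < N | j <= k) j.+1)%N = 'C(k.+2, 2).
Proof.
rewrite -(big_mkord (fun j => (j <= k)%N) succn).
rewrite (eq_bigl (fun i => true && (i < k.+1)%N)) // -big_nat_widen //.
by rewrite -bin2_sum [RHS]big_nat_recl.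
Qed.

Lemma qpoch_ts_factor_poly (k : 'I_N) :
  \prod_(j < N) ((1 - 'X^(j.+1)) * ts_factor_poly k j) =
  'X^'C(k.+2, 2) * geomX N k.+1 %[modX N.+1].
Proof.
have <- : \prod_(j < N) ((if (j <= k)%N then 'X^(j.+1) else 1) *
                         (if j == k then geomX N k.+1 else 1)) =
          'X^'C(k.+2, 2) * geomX N k.+1.
  by rewrite big_split /= -!big_mkcond /= big_pred1_eq prodrXr sum_parts_le.
by apply: eqmodX_prod => j _; apply: mul1B_ts_factor_poly.
Qed.

Lemma qpoch_ts_genpoly : qpoch N * ts_genpoly = A_sum_poly N %[modX N.+1].
Proof.
have qpochE : qpoch N = \prod_(j < N) (1 - 'X^(j.+1)) by rewrite /qpoch big_add1 big_mkord.
have A_sum_polyE : A_sum_poly N = \sum_(k < N) A_term_poly N k.+1.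
  by rewrite /A_sum_poly big_add1 big_mkord.
rewrite ts_genpoly_prod mulr_sumr A_sum_polyE; apply: eqmodX_sum => k _.
by rewrite mulrCA qpochE -big_split; apply/eqmodXMl/qpoch_ts_factor_poly.
Qed.

Lemma coef_ts_genpoly : ts_genpoly`_N = \sum_(m : mults | weight m == N) ts_mults m.
Proof.
rewrite coef_sum [RHS]big_mkcond; apply: eq_bigr => m _.
by rewrite coefCM coefXn eq_sym; case: (weight m == N); rewrite ?mulr1 ?mulr0.
Qed.

End MultiplicityVectors.

Lemma leq_n_lam s n : (n <= n_lam s)%N = all (fun x => x \in s) (iota 1 n).
Proof.
have all_iota_le k : all (fun x => x \in s) (iota 1 k) -> (k <= size s)%N.
  by move=> /allP/(uniq_leq_size (iota_uniq 1 k)); rewrite size_iota.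
have all_iota_leW k l :
    all (fun x => x \in s) (iota 1 l) -> (k <= l)%N -> all (fun x => x \in s) (iota 1 k).
  move=> /allP s_l le_kl; apply/allP => x; rewrite mem_iota => x_k.
  by apply: s_l; rewrite mem_iota; lia.
apply/idP/idP => [le_n|s_n]; last first.
  have lt_n : (n < (size s).+1)%N by rewrite ltnS all_iota_le.
  exact: (@leq_bigmax_cond _ (fun i : 'I_(size s).+1 => all (fun x => x \in s) (iota 1 i))
                            (fun i => i : nat) (Ordinal lt_n)).
case: n le_n => // n; apply: contraTT => s_nN.
rewrite -ltnNge ltnS; apply/bigmax_leqP => i s_i.
by rewrite leqNgt; apply: contra s_nN => /(all_iota_leW _ _ s_i).
Qed.

Lemma leq_size_sumn s : all (fun x => 0 < x)%N s -> (size s <= sumn s)%N.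
Proof. by elim: s => //= x s IHs /andP[x_gt0 /IHs]; lia. Qed.

Lemma leq_mem_sumn s x : x \in s -> (x <= sumn s)%N.
Proof. by elim: s => //= y s IHs; rewrite in_cons => /orP[/eqP -> | /IHs]; lia. Qed.

Section MultsPartitions.
Variable N : nat.
Implicit Type m : mults N.

Definition partition_of m : seq nat :=
  sort geq (flatten [seq nseq (m j) j.+1 | j <- enum 'I_N]).

Definition mults_of (s : seq nat) : mults N :=
  [ffun j : 'I_N => inord (count_mem j.+1 s)].

Lemma count_partition_of m x :
  count_mem x (partition_of m) = (\sum_(j < N) (j.+1 == x) * m j)%N.
Proof.
rewrite count_sort count_flatten -map_comp sumnE big_map big_enum /=.
by apply: eq_bigr => j _; rewrite count_nseq.
Qed.

Lemma count_partition_of_ord m (k : 'I_N) : count_mem k.+1 (partition_of m) = m k.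
Proof.
rewrite count_partition_of (bigD1 k) //= eqxx mul1n big1 ?addn0 // => j neq_jk.
by rewrite eqSS val_eqE (negbTE neq_jk).
Qed.

Lemma count_partition_of_out m x :
  (x == 0)%N || (N < x)%N -> count_mem x (partition_of m) = 0%N.
Proof.
move=> x_out; rewrite count_partition_of big1 // => j _.
suff -> : (j.+1 == x) = false by [].
by apply: contraTF x_out => /eqP <-; have := ltn_ord j; lia.
Qed.

Lemma mem_partition_of m x : (x \in partition_of m) = (0 < count_mem x (partition_of m))%N.
Proof. by rewrite -has_count has_pred1. Qed.

Lemma sumn_partition_of m : sumn (partition_of m) = weight m.
Proof.
rewrite (perm_sumn (permEl (perm_sort _ _))) sumn_flatten -map_comp sumnE big_map big_enum.
by apply: eq_bigr => j _; rewrite /= sumn_nseq mulnC.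
Qed.

Lemma partition_of_is_partition m : is_partition (partition_of m).
Proof.
rewrite /is_partition sort_sorted; last by move=> a b; apply: leq_total.
apply/allP => x; rewrite mem_partition_of; apply: contraTT; rewrite -!eqn0Ngt => /eqP ->.
by rewrite count_partition_of_out.
Qed.

Lemma partition_of_inj : injective partition_of.
Proof.
move=> m1 m2 eq_m; apply/ffunP => k; apply/val_inj.
by have := count_partition_of_ord m1 k; rewrite eq_m count_partition_of_ord.
Qed.

Lemma mults_ofK s : is_partition s -> sumn s = N -> partition_of (mults_of s) = s.
Proof.
move=> /andP[s_sorted s_pos] sum_s.
have geq_trans : transitive geq by move=> a b c /= le_ab le_bc; apply: leq_trans le_bc le_ab.
have geq_anti : antisymmetric geq by move=> a b /andP[le_ba le_ab]; apply/anti_leq/andP.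
apply: (sorted_eq geq_trans geq_anti) => //.
  by case/andP: (partition_of_is_partition (mults_of s)).
apply/allP => x _; apply/eqP.
have [x_out | x_in] := boolP ((x == 0)%N || (N < x)%N).
  rewrite count_partition_of_out //; apply/esym/count_memPn/negP => s_x.
  case/orP: x_out => [/eqP x0 | lt_Nx]; first by move/allP: s_pos => /(_ x s_x); rewrite x0.
  by have := leq_mem_sumn s_x; rewrite sum_s; lia.
have lt_xN : (x.-1 < N)%N by lia.
have -> : x = (Ordinal lt_xN).+1 by rewrite /=; lia.
rewrite count_partition_of_ord ffunE inordK // ltnS.
by apply: leq_trans (count_size _ _) _; rewrite -sum_s leq_size_sumn.
Qed.

Lemma mem_partitions_of s : (s \in partitions_of N) = is_partition s && (sumn s == N).
Proof.
rewrite mem_undup mem_filter.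
case: (boolP (is_partition s && (sumn s == N))) => //= /andP[s_part /eqP sum_s].
have le_size : (size s <= N)%N by rewrite -sum_s leq_size_sumn //; case/andP: s_part.
pose s0 := s ++ nseq (N - size s) 0%N.
have le_s0 : {in s0, forall x, (x <= N)%N}.
  move=> x; rewrite mem_cat => /orP[/leq_mem_sumn | /nseqP[-> _]] //; by rewrite sum_s.
have size_t : size (map (@inord N) s0) == N by rewrite size_map size_cat size_nseq subnKC.
apply/imageP; exists (Tuple size_t) => //=.
have -> : map val (map (@inord N) s0) = s0.
  by rewrite -map_comp -[RHS]map_id; apply/eq_in_map => x /le_s0 le_xN /=; rewrite inordK.
by rewrite filter_cat filter_nseq cats0; case/andP: s_part => _ /all_filterP ->.
Qed.

Lemma prod_ts_factor m (k : 'I_N) : \prod_(j < N) ts_factor k j (m j) =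
  [forall j : 'I_N, (j <= k)%N ==> (0 < m j)%N]%:R * (m k)%:R.
Proof.
have [m_pos | ] := boolP [forall j : 'I_N, (j <= k)%N ==> (0 < m j)%N].
  rewrite mul1r (bigD1 k) //= /ts_factor ltnn eqxx big1 ?mulr1 // => j neq_jk.
  rewrite (negbTE neq_jk); case: ifP => // lt_jk.
  by move/forallP/(_ j): m_pos; rewrite (ltnW lt_jk) /= => ->.
move=> /forallPn[j]; rewrite negb_imply -eqn0Ngt => /andP[le_jk /eqP mj0].
rewrite mul0r (bigD1 j) //= mj0 /ts_factor; case: ltngtP le_jk => // [_ _ | eq_jk _].
  by rewrite mul0r.
by rewrite ifT ?mul0r //; apply/eqP/val_inj.
Qed.

Lemma n_lam_partition_of_le m : (n_lam (partition_of m) <= N)%N.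
Proof.
rewrite leqNgt leq_n_lam; apply/negP => /allP/(_ N.+1).
rewrite mem_iota mem_partition_of count_partition_of_out ?ltnSn ?orbT //.
by move/(_ isT).
Qed.

Lemma all_partition_of m (k : 'I_N) : all (fun x => x \in partition_of m) (iota 1 k.+1) =
  [forall j : 'I_N, (j <= k)%N ==> (0 < m j)%N].
Proof.
apply/allP/forallP => [m_pos j | m_pos x].
  apply/implyP => le_jk; rewrite -count_partition_of_ord -mem_partition_of.
  by apply: m_pos; rewrite mem_iota; lia.
rewrite mem_iota => x_range; have lt_xN : (x.-1 < N)%N by have := ltn_ord k; lia.
have -> : x = (Ordinal lt_xN).+1 by rewrite /=; lia.
rewrite mem_partition_of count_partition_of_ord.
by apply: (implyP (m_pos (Ordinal lt_xN))); rewrite /=; lia.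
Qed.

Lemma ts_partition_of m : ts (partition_of m) = ts_mults m.
Proof.
rewrite /ts (big_nat_widen _ _ N.+1) ?ltnS ?n_lam_partition_of_le //.
rewrite big_mkcond /= big_add1 big_mkord; apply: eq_bigr => k _.
rewrite prod_ts_factor ltnS leq_n_lam all_partition_of count_partition_of_ord.
by case: [forall j, _]; rewrite ?mul1r ?mul0r ?mulr0.
Qed.

Lemma sum_partitions_of :
  \sum_(s <- partitions_of N) ts s = \sum_(m : mults N | weight m == N) ts_mults m.
Proof.
have partitions_ofE : perm_eq (partitions_of N)
    [seq partition_of m | m <- enum [pred m : mults N | weight m == N]].
  apply: uniq_perm; first exact: undup_uniq.
    by rewrite map_inj_uniq ?enum_uniq //; apply: partition_of_inj.
  move=> s; rewrite mem_partitions_of; apply/idP/mapP => [/andP[s_part /eqP sum_s] | [m]].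
    exists (mults_of s); last by rewrite mults_ofK.
    by rewrite mem_enum inE -sumn_partition_of mults_ofK // sum_s.
  rewrite mem_enum inE => /eqP wt_m ->.
  by rewrite partition_of_is_partition sumn_partition_of wt_m /=.
rewrite (perm_big _ partitions_ofE) big_map big_enum /=.
by apply: eq_bigr => m _; apply: ts_partition_of.
Qed.

End MultsPartitions.

Lemma A_series_coef N : A_series N = (ts_genpoly N)`_N.
Proof.
pose G := fps_trunc N (fps_inv qpoch_inf).
have qpoch_G : qpoch N * G = 1 %[modX N.+1].
  apply: (fps_trunc_mulV _ (@fps_trunc_qpoch_inf N)).
  by rewrite /qpoch_inf big_geq // coef1 oner_neq0.
have : G * fps_trunc N A_sum = ts_genpoly N %[modX N.+1].
  apply: (eqmodX_trans (eqmodXMl G (@fps_trunc_A_sum N))).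
  apply: (eqmodX_trans (eqmodXMl G (eqmodX_sym (@qpoch_ts_genpoly N)))).
  by rewrite mulrA [G * _]mulrC -[X in _ = X %[modX _]]mul1r; apply: eqmodXMr.
by rewrite /A_series (coef_fps_mul (N := N)) //; apply.
Qed.

Theorem theorem1p3 (N : nat) :
  A_series N = if N is 0 then 0 else \sum_(s <- partitions_of N) ts s.
Proof.
rewrite A_series_coef coef_ts_genpoly; case: N => [|N]; last by rewrite sum_partitions_of.
by rewrite big1 // => m _; rewrite /ts_mults big_ord0.
Qed.
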